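(* Let $G=(V,E)$ be a graph on $V=\{1,\ldots,n\}$ and $b(\mathbf x)=\sum_{ij\in E}a_{ij}x_ix_j$ with real coefficients. Let $\mathbf x\in\{0,1/2,1\}^n$ and put $T_1=\{i\in V:x_i=1\}$, $T_f=\{i\in V:x_i=1/2\}$. Then \begin{align*} \operatorname{vex}[b](\mathbf x)&=a(\gamma(T_1))+\tfrac12a(\delta(T_1,T_f))+\tfrac12a(\gamma(T_f))-\tfrac12\mu^+(T_f),\\ \operatorname{cav}[b](\mathbf x)&=a(\gamma(T_1))+\tfrac12a(\delta(T_1,T_f))+\tfrac12a(\gamma(T_f))-\tfrac12\mu^-(T_f),\\ \operatorname{chgap}[b](\mathbf x)&=\tfrac12\left(\mu^+(T_f)-\mu^-(T_f)\right). \end{align*}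
   Context: $B=\{(\mathbf x,z)\in[0,1]^n\times\mathbb R:z=b(\mathbf x)\}$; $\operatorname{cav}[b](\mathbf x)=\max\{z:(\mathbf x,z)\in\operatorname{conv}(B)\}$, $\operatorname{vex}[b](\mathbf x)=\min\{z:(\mathbf x,z)\in\operatorname{conv}(B)\}$, $\operatorname{chgap}[b]=\operatorname{cav}[b]-\operatorname{vex}[b]$. For $X\subseteq V$, $\gamma(X)$ is the set of edges of $G$ with both endpoints in $X$; for disjoint $X,Y\subseteq V$, $\delta(X,Y)$ is the set of edges with one endpoint in $X$ and one in $Y$; for $Z\subseteq E$, $a(Z)=\sum_{ij\in Z}a_{ij}$. For $X\subseteq V$, $\mu^+(X)=\max\{a(\delta(U_1,U_2)):U_1\cup U_2=X,\ U_1\cap U_2=\emptyset\}$ and $\mu^-(X)=\min\{a(\delta(U_1,U_2)):U_1\cup U_2=X,\ U_1\cap U_2=\emptyset\}$ (maximum and minimum cut weights in the subgraph induced by $X$, with $U_1$ or $U_2$ allowed to be empty). *)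

From HB Require Import structures.
From mathcomp Require Import all_boot all_order all_algebra.
Set Implicit Arguments. Unset Strict Implicit. Unset Printing Implicit Defensive.
Import Order.TTheory GRing.Theory Num.Theory.
Local Open Scope ring_scope.

(* Graph G on vertex set 'I_n given by a relation E; the edge {i,j} is
   present iff (i < j) && E i j (each edge counted once, as the pair i<j).
   a i j (for i < j) is the coefficient a_ij. *)

Section Defs.
Variables (R : realFieldType) (n : nat) (E : rel 'I_n) (a : 'I_n -> 'I_n -> R).

Definition isedge (i j : 'I_n) : bool := ((i < j)%N && E i j).

Definition bilin (x : 'I_n -> R) : R :=
  \sum_(i < n) \sum_(j < n | isedge i j) a i j * x i * x j.

Definition a_gamma (X : {set 'I_n}) : R :=
  \sum_(i < n) \sum_(j < n | isedge i j && (i \in X) && (j \in X)) a i j.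

Definition a_delta (X Y : {set 'I_n}) : R :=
  \sum_(i < n) \sum_(j < n | isedge i j &&
      (((i \in X) && (j \in Y)) || ((i \in Y) && (j \in X)))) a i j.

Definition mu_plus (X : {set 'I_n}) : R :=
  \big[Num.max/a_delta set0 X]_(U in powerset X) a_delta U (X :\: U).
Definition mu_minus (X : {set 'I_n}) : R :=
  \big[Num.min/a_delta set0 X]_(U in powerset X) a_delta U (X :\: U).

(* (x,z) ∈ conv(B), B = graph of b over [0,1]^n: finite convex combination *)
Definition in_convB (x : 'I_n -> R) (z : R) : Prop :=
  exists (k : nat) (lam : 'I_k -> R) (p : 'I_k -> 'I_n -> R),
    [/\ forall t, 0 <= lam t,
        \sum_(t < k) lam t = 1,
        forall t i, 0 <= p t i <= 1,
        forall i, x i = \sum_(t < k) lam t * p t i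
      & z = \sum_(t < k) lam t * bilin (p t)].

Definition is_vex (x : 'I_n -> R) (v : R) : Prop :=
  in_convB x v /\ forall z, in_convB x z -> v <= z.
Definition is_cav (x : 'I_n -> R) (c : R) : Prop :=
  in_convB x c /\ forall z, in_convB x z -> z <= c.
End Defs.

From HB Require Import structures.
From mathcomp Require Import all_boot all_order all_algebra.
From mathcomp Require Import ring lra.
Set Implicit Arguments. Unset Strict Implicit. Unset Printing Implicit Defensive.
Import Order.TTheory GRing.Theory Num.Theory.
Local Open Scope ring_scope.

(* Since x_i is 0 or 1 off Tf, every point of a convex combination
   representing x lies on the face of the cube where those coordinates are
   frozen at x_i.  On that face write b = L - C, where L ([lin_part]) is
   linear, agrees with b on the edges not contained in Tf and is the secant
   (p_i + p_j)/2 on the edges inside Tf; then C ([cut_part]) is multiaffine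
   and equals a(delta(W, Tf \ W))/2 at the vertex of the face that is 1
   exactly on W.  So the values z with (x, z) in conv(B) are L(x) minus
   averages of C, and a multiaffine function on a box lies between its
   extreme vertex values.  Both extremes are attained by the two-point
   combination of the complementary vertices W and Tf \ W. *)

Section Multiaffine.
Variables (R : realDomainType) (n : nat).
Implicit Types (F : ('I_n -> R) -> R) (p q : 'I_n -> R) (S : {set 'I_n}).

Definition set_coord p (k : 'I_n) (v : R) : 'I_n -> R :=
  fun i => if i == k then v else p i.

Definition multiaffine F := forall k p,
  F p = p k * F (set_coord p k 1) + (1 - p k) * F (set_coord p k 0).

Definition is_vertex S p q :=
  (forall i, i \in S -> (q i == 0) || (q i == 1)) /\
  (forall i, i \notin S -> q i = p i).

Lemma is_vertex_set_coord S p k v q : k \in S -> (v == 0) || (v == 1) ->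
  is_vertex (S :\ k) (set_coord p k v) q -> is_vertex S p q.
Proof.
move=> kS v01 [q01 qp]; split=> i iS; case: (eqVneq i k) => [ik|ik]; rewrite ?ik.
- by rewrite qp ?setD11 // /set_coord eqxx.
- by apply: q01; rewrite in_setD1 ik.
- by rewrite ik kS in iS.
- by rewrite qp ?in_setD1 ?(negbTE iS) ?andbF // /set_coord (negbTE ik).
Qed.

Lemma multiaffine_ge0 F S p : multiaffine F ->
  (forall i, i \in S -> 0 <= p i <= 1) ->
  (forall q, is_vertex S p q -> 0 <= F q) -> 0 <= F p.
Proof.
move=> hF; have vertex_set0 p' : is_vertex set0 p' p' by split=> [i|//]; rewrite inE.
move: {2}#|S| (leqnn #|S|) => m; elim: m S p => [|m IH] S p.
  by rewrite leqn0 cards_eq0 => /eqP-> _; apply.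
case: (set_0Vmem S) => [-> _ _|[k kS] hS hp hvert]; first by apply.
have hS' : (#|S :\ k| <= m)%N by move: hS; rewrite (cardsD1 k S) kS.
have [pk0 pk1] := andP (hp k kS).
have hsub v : (v == 0) || (v == 1) -> 0 <= F (set_coord p k v).
  move=> v01; apply: (IH (S :\ k)) => // [i|q /(is_vertex_set_coord kS v01)/hvert//].
  by rewrite in_setD1 => /andP[ik iS]; rewrite /set_coord (negbTE ik); apply: hp.
rewrite (hF k p) addr_ge0 // mulr_ge0 ?subr_ge0 ?hsub ?eqxx ?orbT //.
Qed.

Lemma multiaffine_bounded F S p lo hi : multiaffine F ->
  (forall i, i \in S -> 0 <= p i <= 1) ->
  (forall q, is_vertex S p q -> lo <= F q <= hi) -> lo <= F p <= hi.
Proof.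
move=> hF hp hvert.
have hlo : 0 <= F p - lo.
  apply: (@multiaffine_ge0 (fun q => F q - lo) S) => // [k q|q /hvert/andP[]].
    by rewrite (hF k q); ring.
  by rewrite subr_ge0.
have hhi : 0 <= hi - F p.
  apply: (@multiaffine_ge0 (fun q => hi - F q) S) => // [k q|q /hvert/andP[_]].
    by rewrite (hF k q); ring.
  by rewrite subr_ge0.
by apply/andP; split; rewrite -subr_ge0.
Qed.

End Multiaffine.

Section ConvexCombination.
Variables (R : realDomainType) (k : nat) (lam v : 'I_k -> R).
Hypotheses (lam_ge0 : forall t, 0 <= lam t) (lam_sum : \sum_(t < k) lam t = 1)
  (v01 : forall t, 0 <= v t <= 1).

Lemma convex_comb_eq0 t :
  \sum_(s < k) lam s * v s = 0 -> lam t != 0 -> v t = 0.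
Proof.
move=> hsum lt0; have /eqP : lam t * v t = 0.
  by apply: (psumr_eq0P _ hsum) => // s _; rewrite mulr_ge0 //; case/andP: (v01 s).
by rewrite mulf_eq0 (negbTE lt0) => /eqP.
Qed.

Lemma convex_comb_eq1 t :
  \sum_(s < k) lam s * v s = 1 -> lam t != 0 -> v t = 1.
Proof.
move=> hsum lt0; have /eqP : lam t * (1 - v t) = 0.
  apply: (@psumr_eq0P _ _ xpredT (fun s => lam s * (1 - v s))) => // [s _|].
    by rewrite mulr_ge0 // subr_ge0; case/andP: (v01 s).
  under eq_bigr do rewrite mulrBr mulr1.
  by rewrite sumrB lam_sum hsum subrr.
by rewrite mulf_eq0 (negbTE lt0) subr_eq0 => /eqP.
Qed.

End ConvexCombination.

Section BigMinMaxAttained.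
Variables (d : Order.disp_t) (T : orderType d) (I : finType) (P : pred I) (F : I -> T).

Lemma bigmax_attained j : P j ->
  exists2 i, P i & \big[Order.max/F j]_(i | P i) F i = F i.
Proof.
move=> Pj; apply: (big_ind (fun y => exists2 i, P i & y = F i)) => [|y z|i Pi].
- by exists j.
- move=> [i Pi ->] [i' Pi' ->]; case: (leP (F i) (F i')) => h.
    by exists i'; rewrite ?max_r.
  by exists i; rewrite ?max_l ?ltW.
- by exists i.
Qed.

Lemma bigmin_attained j : P j ->
  exists2 i, P i & \big[Order.min/F j]_(i | P i) F i = F i.
Proof.
move=> Pj; apply: (big_ind (fun y => exists2 i, P i & y = F i)) => [|y z|i Pi].
- by exists j.
- move=> [i Pi ->] [i' Pi' ->]; case: (leP (F i) (F i')) => h.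
    by exists i; rewrite ?min_l.
  by exists i'; rewrite ?min_r ?ltW.
- by exists i.
Qed.

End BigMinMaxAttained.

Section Graph.
Variables (R : realFieldType) (n : nat) (E : rel 'I_n) (a : 'I_n -> 'I_n -> R).

Lemma bilin_multiaffine : multiaffine (bilin E a).
Proof.
move=> k p; rewrite /bilin !mulr_sumr -big_split; apply: eq_bigr => i _.
rewrite !mulr_sumr -big_split; apply: eq_bigr => j /andP[lt_ij _] /=.
have nij : i != j by apply: contraTneq lt_ij => ->; rewrite ltnn.
rewrite /set_coord; case: (eqVneq i k) nij => [->|ik]; case: (eqVneq j k) => [->|jk] //= _; ring.
Qed.

Lemma a_deltaC (X Y : {set 'I_n}) : a_delta E a X Y = a_delta E a Y X.
Proof. by apply: eq_bigr => i _; apply: eq_bigl => j; rewrite orbC. Qed.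

Lemma is_vex_uniq x v v' : is_vex E a x v -> is_vex E a x v' -> v = v'.
Proof. by move=> [hv lev] [hv' lev']; apply/eqP; rewrite eq_le lev ?lev'. Qed.

Lemma is_cav_uniq x c c' : is_cav E a x c -> is_cav E a x c' -> c = c'.
Proof. by move=> [hc gec] [hc' gec']; apply/eqP; rewrite eq_le gec ?gec'. Qed.

End Graph.

Section HalfIntegralPoint.
Variables (R : realFieldType) (n : nat) (E : rel 'I_n) (a : 'I_n -> 'I_n -> R)
  (x : 'I_n -> R).
Hypothesis hx : forall i, [\/ x i = 0, x i = 2^-1 | x i = 1].

Definition T1 := [set i | x i == 1].
Definition Tf := [set i | x i == 2^-1].
Local Notation base :=
  (a_gamma E a T1 + 2^-1 * a_delta E a T1 Tf + 2^-1 * a_gamma E a Tf).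

Lemma x_cases i :
  [\/ [/\ x i = 0, i \notin T1 & i \notin Tf],
      [/\ x i = 2^-1, i \notin T1 & i \in Tf]
    | [/\ x i = 1, i \in T1 & i \notin Tf]].
Proof.
rewrite /T1 /Tf !inE; case: (hx i) => ->; [apply: Or31|apply: Or32|apply: Or33];
  by split; rewrite ?eqxx //; apply/eqP => h; lra.
Qed.

Definition lin_term (p : 'I_n -> R) (i j : 'I_n) : R :=
  if (i \in Tf) && (j \in Tf) then 2^-1 * (p i + p j)
  else if i \in Tf then x j * p i else x i * p j.

Definition lin_part (p : 'I_n -> R) : R :=
  \sum_(i < n) \sum_(j < n | isedge E i j) a i j * lin_term p i j.

Definition cut_part (p : 'I_n -> R) : R := lin_part p - bilin E a p.

Lemma lin_part_multiaffine : multiaffine lin_part.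
Proof.
move=> k p; rewrite /lin_part !mulr_sumr -big_split; apply: eq_bigr => i _.
rewrite !mulr_sumr -big_split; apply: eq_bigr => j _ /=; rewrite /lin_term /set_coord.
by case: (eqVneq i k) => [->|ik]; case: (eqVneq j k) => [->|jk];
  rewrite ?eqxx ?(negbTE ik) ?(negbTE jk); case: ifP => _; try case: ifP => _; ring.
Qed.

Lemma cut_part_multiaffine : multiaffine cut_part.
Proof.
by move=> k p; rewrite /cut_part (lin_part_multiaffine k p) (bilin_multiaffine E a k p); ring.
Qed.

Lemma lin_part_comb k (lam : 'I_k -> R) (p : 'I_k -> 'I_n -> R) q :
  (forall i, q i = \sum_(t < k) lam t * p t i) ->
  \sum_(t < k) lam t * lin_part (p t) = lin_part q.
Proof.
move=> hq; rewrite /lin_part.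
under eq_bigr do rewrite mulr_sumr.
rewrite exchange_big; apply: eq_bigr => i _.
under eq_bigr do rewrite mulr_sumr.
rewrite exchange_big; apply: eq_bigr => j _ /=.
rewrite /lin_term !hq; case: (i \in Tf); case: (j \in Tf) => /=;
  by rewrite -?big_split !mulr_sumr; apply: eq_bigr => t _ /=; ring.
Qed.

Lemma lin_part_x : lin_part x = base.
Proof.
pose ind (b : bool) (i j : 'I_n) := if isedge E i j && b then a i j else 0.
transitivity (\sum_(i < n) \sum_(j < n)
  (ind ((i \in T1) && (j \in T1)) i j
   + 2^-1 * ind (((i \in T1) && (j \in Tf)) || ((i \in Tf) && (j \in T1))) i j
   + 2^-1 * ind ((i \in Tf) && (j \in Tf)) i j)).
  rewrite /lin_part; apply: eq_bigr => i _; rewrite big_mkcond; apply: eq_bigr => j _.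
  rewrite /ind /lin_term; case: (isedge E i j) => /=; last by ring.
  case: (x_cases i) => [[-> /negbTE-> /negbTE->]|[-> /negbTE-> ->]|[-> -> /negbTE->]];
  case: (x_cases j) => [[-> /negbTE-> /negbTE->]|[-> /negbTE-> ->]|[-> -> /negbTE->]] /=;
  by field.
rewrite /ind /a_gamma /a_delta.
under eq_bigr => i _ do rewrite !big_split /= -!mulr_sumr -!big_mkcond.
rewrite !big_split /= -!mulr_sumr.
by congr (_ + _ + _ * _); apply: eq_bigr => i _; apply: eq_bigl => j; rewrite andbA.
Qed.

Definition face_vertex (W : {set 'I_n}) : 'I_n -> R :=
  fun i => if i \in Tf then (i \in W)%:R else x i.

Lemma cut_part_face_vertex (W : {set 'I_n}) q : W \subset Tf -> q =1 face_vertex W ->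
  cut_part q = 2^-1 * a_delta E a W (Tf :\: W).
Proof.
move=> /subsetP sub_WTf qW.
have inW u : (u \in W) = (u \in Tf) && (u \in W).
  by case uW: (u \in W); rewrite ?andbT ?andbF ?sub_WTf.
rewrite /cut_part /lin_part /bilin /a_delta -sumrB mulr_sumr; apply: eq_bigr => i _.
rewrite -sumrB mulr_sumr big_mkcond [RHS]big_mkcond; apply: eq_bigr => j _ /=.
case: (isedge E i j) => /=; last by ring.
rewrite /lin_term !qW /face_vertex !in_setD (inW i) (inW j).
by case: (i \in Tf); case: (j \in Tf); case: (i \in W); case: (j \in W) => /=; field.
Qed.

Lemma face_vertexP p q : (forall i, i \notin Tf -> p i = x i) ->
  is_vertex Tf p q -> q =1 face_vertex (Tf :&: [set i | q i == 1]).
Proof.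
move=> px [q01 qp] i; rewrite /face_vertex.
case: ifPn => [iT|iT]; last by rewrite qp ?px.
rewrite in_setI iT inE.
by case/orP: (q01 i iT) => /eqP->; rewrite ?eqxx // eq_sym oner_eq0.
Qed.

Lemma cut_part_bounds p : (forall i, i \in Tf -> 0 <= p i <= 1) ->
  (forall i, i \notin Tf -> p i = x i) ->
  2^-1 * mu_minus E a Tf <= cut_part p <= 2^-1 * mu_plus E a Tf.
Proof.
move=> p01 px; apply: (multiaffine_bounded cut_part_multiaffine p01) => q qvert.
have sub_Tf : Tf :&: [set i | q i == 1] \in powerset Tf by rewrite powersetE subsetIl.
rewrite (cut_part_face_vertex (subsetIl _ _) (face_vertexP px qvert)).
have half_ge0 : (0 : R) <= 2^-1 by rewrite invr_ge0 ler0n.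
apply/andP; split; apply: ler_wpM2l => //.
- by rewrite /mu_minus; apply: bigmin_le_cond.
- exact: (@le_bigmax_cond _ _ _ _ _ _ (fun U => a_delta E a U (Tf :\: U)) sub_Tf).
Qed.

Lemma in_convB_bounds z : in_convB E a x z ->
  base - 2^-1 * mu_plus E a Tf <= z <= base - 2^-1 * mu_minus E a Tf.
Proof.
case=> k [lam] [p] [lam_ge0 lam_sum p01 hxp ->].
have on_face t : lam t != 0 -> forall i, i \notin Tf -> p t i = x i.
  move=> lt0 i iT; have pi01 s : 0 <= p s i <= 1 by [].
  case: (x_cases i) => [[xi0 _ _]|[_ _ iT']|[xi1 _ _]].
  - by rewrite xi0 (convex_comb_eq0 lam_ge0 pi01) // -hxp.
  - by rewrite iT' in iT.
  - by rewrite xi1 (convex_comb_eq1 lam_ge0 lam_sum pi01) // -hxp.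
set m := 2^-1 * mu_minus E a Tf; set M := 2^-1 * mu_plus E a Tf.
have cut_bounds : m <= \sum_(t < k) lam t * cut_part (p t) <= M.
  rewrite -[m]mul1r -[M]mul1r -lam_sum !mulr_suml.
  apply/andP; split; apply: ler_sum => t _;
    have [->|lt0] := eqVneq (lam t) 0; rewrite ?mul0r //; apply: ler_wpM2l => //;
    by case/andP: (cut_part_bounds (fun i _ => p01 t i) (on_face t lt0)).
have -> : \sum_(t < k) lam t * bilin E a (p t) =
          base - \sum_(t < k) lam t * cut_part (p t).
  rewrite -lin_part_x -(lin_part_comb hxp) -sumrB.
  by apply: eq_bigr => t _; rewrite /cut_part; ring.
by case/andP: cut_bounds => lo hi; apply/andP; split; lra.
Qed.

Lemma face_vertex01 (W : {set 'I_n}) i : 0 <= face_vertex W i <= 1.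
Proof.
rewrite /face_vertex; case: ifPn => [_|iT]; first by case: (i \in W); rewrite /= ?lexx ?ler01.
case: (x_cases i) => [[-> _ _]|[_ _ iT']|[-> _ _]]; rewrite ?lexx ?ler01 //.
by rewrite iT' in iT.
Qed.

Lemma in_convB_face_pair (U : {set 'I_n}) : U \subset Tf ->
  in_convB E a x (base - 2^-1 * a_delta E a U (Tf :\: U)).
Proof.
move=> sub_UTf.
pose p (t : 'I_2) := if val t == 0%N then face_vertex U else face_vertex (Tf :\: U).
have sum2 (F : 'I_2 -> R) : \sum_(t < 2) F t = F ord0 + F ord_max.
  by rewrite !big_ord_recl big_ord0 addr0; congr (_ + F _); apply: val_inj.
have hxp i : x i = \sum_(t < 2) 2^-1 * p t i.
  rewrite sum2 /p /= /face_vertex in_setD.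
  case: ifPn => [iT|_]; last by field.
  by move: iT; rewrite /Tf inE => /eqP ->; case: (i \in U) => /=; field.
exists 2%N, (fun _ => 2^-1), p; split => //.
- by move=> _; rewrite invr_ge0 ler0n.
- by rewrite sum2; field.
- by move=> t i; rewrite /p; case: ifP => _; apply: face_vertex01.
rewrite (eq_bigr (fun t => 2^-1 * lin_part (p t) - 2^-1 * cut_part (p t))); last first.
  by move=> t _; rewrite /cut_part; ring.
rewrite sumrB (lin_part_comb hxp) lin_part_x sum2 /p /=.
rewrite (cut_part_face_vertex sub_UTf (frefl _)).
rewrite (cut_part_face_vertex (subsetDl Tf U) (frefl _)).
rewrite setDDr setDv set0U (setIidPr sub_UTf) (a_deltaC _ _ (Tf :\: U)).
by field.
Qed.

Lemma is_vex_half_integral : is_vex E a x (base - 2^-1 * mu_plus E a Tf).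
Proof.
split; last by move=> z /in_convB_bounds/andP[].
have [U sub_UTf ->] : exists2 U, U \in powerset Tf & mu_plus E a Tf = a_delta E a U (Tf :\: U).
  have set0_sub : set0 \in powerset Tf by rewrite powersetE sub0set.
  by have := bigmax_attained (fun U => a_delta E a U (Tf :\: U)) set0_sub; rewrite setD0.
by apply: in_convB_face_pair; rewrite -powersetE.
Qed.

Lemma is_cav_half_integral : is_cav E a x (base - 2^-1 * mu_minus E a Tf).
Proof.
split; last by move=> z /in_convB_bounds/andP[].
have [U sub_UTf ->] : exists2 U, U \in powerset Tf & mu_minus E a Tf = a_delta E a U (Tf :\: U).
  have set0_sub : set0 \in powerset Tf by rewrite powersetE sub0set.
  by have := bigmin_attained (fun U => a_delta E a U (Tf :\: U)) set0_sub; rewrite setD0.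
by apply: in_convB_face_pair; rewrite -powersetE.
Qed.

End HalfIntegralPoint.

Theorem lemma1 (R : realFieldType) (n : nat) (E : rel 'I_n)
  (a : 'I_n -> 'I_n -> R) (x : 'I_n -> R)
  (hx : forall i, [\/ x i = 0, x i = 2^-1 | x i = 1]) :
  let T1 := [set i | x i == 1] in
  let Tf := [set i | x i == 2^-1] in
  let base := a_gamma E a T1 + 2^-1 * a_delta E a T1 Tf + 2^-1 * a_gamma E a Tf in
  [/\ is_vex E a x (base - 2^-1 * mu_plus E a Tf),
      is_cav E a x (base - 2^-1 * mu_minus E a Tf)
    & forall v c, is_vex E a x v -> is_cav E a x c ->
        c - v = 2^-1 * (mu_plus E a Tf - mu_minus E a Tf)].
Proof.
move=> T1 Tf base.
have hvex := is_vex_half_integral E a hx.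
have hcav := is_cav_half_integral E a hx.
split=> // v c /(is_vex_uniq hvex) <- /(is_cav_uniq hcav) <-.
by rewrite /base; ring.
Qed.
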